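(* Let $n,t$ be integers with $4\leq t\leq \frac{n+2}{2}$, and let $T_n^*$ be any tree of the form described below with these $n,t$. Then $\kappa^1(T_n^* )=n-t$.
   Context: For a connected graph $G=(V,E)$: a set $F\subseteq V$ is a $1$-good-neighbor faulty set if every vertex of $V-F$ has at least one neighbor in $V-F$; a $1$-good-neighbor cut is such an $F$ with $G-F$ disconnected; $\kappa^1(G)$ is the minimum cardinality of a $1$-good-neighbor cut. The tree $T_n^*$: let $K_{1,n-t-1}$ be a star with center $v$ and leaves $u_1,\dots,u_{n-t-1}$; let $r\ge 2$ and $a_1,\dots,a_r\ge 2$ be integers with $\sum_{i=1}^r a_i=t$, and let $K_{1,a_1-1},\dots,K_{1,a_r-1}$ be pairwise disjoint stars (disjoint from the first) with centers $w_1,\dots,w_r$; $T_n^*$ is the tree of order $n$ obtained by adding the edges $vw_1,\dots,vw_r$. *)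

From mathcomp Require Import all_boot.
Set Implicit Arguments. Unset Strict Implicit. Unset Printing Implicit Defensive.

Section GoodNeighbor.
Variables (T : finType) (e : rel T).

Definition del_rel (F : {set T}) : rel T :=
  [rel x y | [&& e x y, x \notin F & y \notin F]].

Definition good1 (F : {set T}) : bool :=
  [forall x in ~: F, exists y in ~: F, e x y].

Definition connected_del (F : {set T}) : bool :=
  [forall x in ~: F, forall y in ~: F, connect (del_rel F) x y].

Definition good1_cut (F : {set T}) : bool := good1 F && ~~ connected_del F.

(* kappa^1(G): minimum cardinality of a 1-good-neighbor cut
   (default #|T| if there is none; the theorem's value n - t < n excludes this) *)
Definition kappa1 : nat :=
  \big[minn/#|T|]_(F : {set T} | good1_cut F) #|F|.
End GoodNeighbor.

(* Vertices:
   None                 = v (center of K_{1,n-t-1})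
   Some (inl k)         = u_k, k < n-t-1
   Some (inr (i; 0))    = w_i (center of the i-th star K_{1,a_i - 1})
   Some (inr (i; j)), 0 < j < a_i = the a_i - 1 leaves of the i-th star. *)
Definition Tvert (n t r : nat) (a : 'I_r -> nat) : finType :=
  option ('I_(n - t - 1) + {i : 'I_r & 'I_(a i)})%type.

Definition Tadj (n t r : nat) (a : 'I_r -> nat) : rel (Tvert n t a) :=
  fun x y =>
    match x, y with
    | None, Some (inl _) => true
    | Some (inl _), None => true
    | None, Some (inr q) => val (tagged q) == 0
    | Some (inr p), None => val (tagged p) == 0
    | Some (inr p), Some (inr q) =>
        (tag p == tag q) && ((val (tagged p) == 0) (+) (val (tagged q) == 0))
    | _, _ => false
    end.

From mathcomp Require Import all_boot.
From mathcomp Require Import zify.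

Set Implicit Arguments.
Unset Strict Implicit.
Unset Printing Implicit Defensive.

(* A 1-good-neighbor cut F must contain v: otherwise every vertex of G - F is
   within distance 2 of v (a surviving leaf of the i-th star keeps its
   neighbor w_i), so G - F is connected.  The u_k, whose only neighbor is v,
   then lie in F too, so #|F| >= n - t.  Conversely, deleting v and the u_k
   leaves the r >= 2 stars K_{1,a_i-1}, each with an edge, as separate
   components. *)

Lemma big_minn_eq (I : finType) (P : pred I) (F : I -> nat) x m i0 :
  P i0 -> F i0 = m -> m <= x -> (forall i, P i -> m <= F i) ->
  \big[minn/x]_(i | P i) F i = m.
Proof.
move=> Pi0 <- {m} mx lbF; apply/eqP; rewrite eqn_leq; apply/andP; split.
  elim: (index_enum I) (mem_index_enum i0) => // j s IHs.
  rewrite big_cons in_cons => /predU1P [<-|/IHs]; first by rewrite Pi0 geq_minl.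
  by case: (P j) => // /(leq_trans (geq_minr _ _)).
by apply: (big_ind (leq (F i0))) => // u w mu mw; rewrite leq_min mu mw.
Qed.

Section GoodNeighborCut.
Variables (T : finType) (e : rel T).
Implicit Types (F : {set T}) (x y c : T).

Lemma del_rel_sym F : symmetric e -> symmetric (del_rel e F).
Proof. by move=> esym x y; rewrite /del_rel /= esym [(x \notin F) && _]andbC. Qed.

Lemma good1P F x : good1 e F -> x \notin F -> exists2 y, y \notin F & e x y.
Proof.
move=> /forallP /(_ x); rewrite in_setC => /implyP gx /gx /existsP [y].
by rewrite in_setC => /andP [yF exy]; exists y.
Qed.

Lemma good1_pendant F x : good1 e F -> (forall y, e x y -> y \in F) -> x \in F.
Proof.
move=> gF onlyF; apply/negPn/negP => /(good1P gF) [y /negP yF /onlyF].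
exact: yF.
Qed.

Lemma connected_del_hub F c :
  symmetric e -> (forall x, x \notin F -> connect (del_rel e F) x c) ->
  connected_del e F.
Proof.
move=> esym toc; apply/forallP => x; apply/implyP; rewrite in_setC => xF.
apply/forallP => y; apply/implyP; rewrite in_setC => yF.
apply: connect_trans (toc x xF) _.
by rewrite (sym_connect_sym (del_rel_sym F esym)) toc.
Qed.

Lemma closed_not_connected_del F (P : {pred T}) x y :
  closed (del_rel e F) P -> x \notin F -> y \notin F -> x \in P -> y \notin P ->
  ~~ connected_del e F.
Proof.
move=> clP xF yF Px Py; apply/negP => /forallP /(_ x) /implyP.
rewrite in_setC => /(_ xF) /forallP /(_ y) /implyP; rewrite in_setC => /(_ yF).
by move/(closed_connect clP); rewrite Px (negbTE Py).
Qed.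

Lemma kappa1_eq F0 :
  good1_cut e F0 -> (forall F, good1_cut e F -> #|F0| <= #|F|) ->
  kappa1 e = #|F0|.
Proof. by move=> cutF0 minF0; apply: big_minn_eq cutF0 _ (max_card _) minF0. Qed.

End GoodNeighborCut.

Section StarTree.
Variables (n t r : nat) (a : 'I_r -> nat).
Notation T := (Tvert n t a).
Notation E := (@Tadj n t r a).

Definition star_vertex i (j : 'I_(a i)) : T :=
  Some (inr (Tagged (fun k => 'I_(a k)) j)).

Definition center_star : {set T} :=
  None |: [set Some (inl k) | k : 'I_(n - t - 1)].

Lemma Tadj_sym : symmetric E.
Proof. by move=> [[k|p]|] [[l|q]|] //=; rewrite eq_sym addbC. Qed.

Lemma card_center_star : #|center_star| = (n - t - 1).+1.
Proof.
rewrite cardsU1 card_imset; last by move=> k l [].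
by rewrite card_ord; case: imsetP => // -[k _].
Qed.

Lemma star_vertex_notin_center_star p : (Some (inr p) : T) \notin center_star.
Proof. by rewrite in_setU1 /=; apply/imsetP => -[k _]. Qed.

Lemma center_in_cut F : good1_cut E F -> None \in F.
Proof.
case/andP => gF; apply: contraR => vF.
apply: (connected_del_hub Tadj_sym) => x xF.
case: x xF => [[k|[i j]]|] xF //.
  by apply: connect1; rewrite /del_rel /= xF vF.
have [j0|j0] := eqVneq (val j) 0.
  by apply: connect1; rewrite /del_rel /= xF vF j0.
have [[[l|[i' j']]|] yF] := good1P gF xF; rewrite /= ?(negbTE j0) //.
case/andP => /eqP ii' /= j'0; subst i'.
apply: (connect_trans (y := Some (inr (existT _ i j')))); apply: connect1.
  by rewrite /del_rel /= xF yF eqxx (negbTE j0) j'0.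
by rewrite /del_rel /= yF vF j'0.
Qed.

Lemma center_star_sub_cut F : good1_cut E F -> center_star \subset F.
Proof.
move=> cutF; have vF := center_in_cut cutF; case/andP: cutF => gF _.
apply/subsetP => x; rewrite in_setU1 => /orP [/eqP -> //|/imsetP [k _ ->]].
by apply: good1_pendant gF _ => -[[l|q]|].
Qed.

Hypotheses (r2 : 2 <= r) (a2 : forall i, 2 <= a i).

Lemma center_star_good1 : good1 E center_star.
Proof.
apply/forallP => x; apply/implyP; rewrite in_setC.
case: x => [[k|[i j]]|] xS; last by rewrite setU11 in xS.
  by rewrite in_setU1 /= imset_f in xS.
pose center : 'I_(a i) := Ordinal (ltnW (a2 i)).
pose leaf : 'I_(a i) := Ordinal (a2 i).
apply/existsP; exists (star_vertex (if val j == 0 then leaf else center)).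
rewrite in_setC star_vertex_notin_center_star /= eqxx /=.
by case: eqP.
Qed.

Lemma center_star_disconnected : ~~ connected_del E center_star.
Proof.
have a0 i : 0 < a i := ltnW (a2 i).
pose i0 : 'I_r := Ordinal (ltnW r2).
pose i1 : 'I_r := Ordinal r2.
pose in_star0 : {pred T} :=
  fun x => if x is Some (inr p) then tag p == i0 else false.
apply: (@closed_not_connected_del _ _ _ in_star0 (star_vertex (Ordinal (a0 i0)))
  (star_vertex (Ordinal (a0 i1)))); rewrite ?star_vertex_notin_center_star //.
move=> [[k|p]|] [[l|q]|]; rewrite /del_rel /= ?setU11 ?andbF //.
by case/andP => /andP [/eqP pq _] _; rewrite !unfold_in /= pq.
Qed.

Lemma center_star_cut : good1_cut E center_star.
Proof. by rewrite /good1_cut center_star_good1 center_star_disconnected. Qed.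

End StarTree.

Theorem lemma3p1 (n t r : nat) (a : 'I_r -> nat) :
  4 <= t -> 2 * t <= n + 2 ->
  2 <= r -> (forall i, 2 <= a i) -> \sum_(i < r) a i = t ->
  kappa1 (@Tadj n t r a) = n - t.
Proof.
move=> t4 nt r2 a2 _.
have -> : n - t = (n - t - 1).+1 by lia.
rewrite -(@card_center_star n t r a).
apply: (kappa1_eq (@center_star_cut n t r a r2 a2)) => F cutF.
exact/subset_leq_card/center_star_sub_cut.
Qed.
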